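(* Let $M$ be a metric space with $\#M\ge3$ and $s(M)>0$. For each pair $i,j\in M$ let a real number $a_{ij}=a_{ji}$ be given with $a_{ii}=0$ and $|a_{ij}|<s(M)$; define $\rho(i,j)=|ij|+a_{ij}$ and $a=\sup_{i,j}|a_{ij}|$. Assume $a\le t(M)/3$. Then: (1) $\rho$ is a metric on $M$; (2) the metric space $M_\rho=(M,\rho)$ satisfies $d_{GH}(M,M_\rho)\le a/2$; (3) if in addition $a/2<\min\{s(M)/4,e(M)/4\}$, then $d_{GH}(M,M_\rho)=a/2$; (4) under the assumptions of (3), if $a_{ij}\in\{a,-a\}$ for all $i\ne j$, then $M_\rho\in S_{a/2}(M)$; moreover, if $a'_{ij}=a'_{ji}\in\{a,-a\}$ ($i\ne j$), $a'_{ii}=0$, is another such family with $\rho'(i,j)=|ij|+a'_{ij}$, and $\rho_t=(1-t)\rho+t\rho'$ for $t\in[0,1]$, then each $(M,\rho_t)$ is a metric space, the map $t\mapsto M^t:=(M,\rho_t)$ is a continuous curve in $\mathcal{GH}$, and if $a_{ij}=a'_{ij}$ for at least one pair $i\ne j$, then $M^t\in S_{a/2}(M)$ for all $t\in[0,1]$.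
   Context: For a metric space $M$ with $\#M\ge3$: $s(M)=\inf\{|xx'|: x\ne x'\}$; $t(M)=\inf\{|xx'|+|x'x''|-|xx''|: x,x',x''\text{ pairwise distinct}\}$; $S(M)$ is the set of bijections $M\to M$ and $e(M)=\inf\{\operatorname{dis}f: f\in S(M), f\ne\mathrm{id}\}$, where $\operatorname{dis}f=\sup_{x,x'}||xx'|-|f(x)f(x')||$. $d_{GH}$ is the Gromov–Hausdorff distance: $d_{GH}(X,Y)=\frac12\inf\{\operatorname{dis}R\}$ over correspondences $R\subset X\times Y$ (relations with both projections surjective), $\operatorname{dis}R=\sup\{||xx'|-|yy'||:(x,y),(x',y')\in R\}$. $\mathcal{GH}$ is the class (NBG sense) of isometry classes of all metric spaces; for each cardinal $n$ the subclass $\mathcal{GH}_n$ of spaces of cardinality at most $n$ is a set with topology based on open $d_{GH}$-balls, and a map from a topological space into $\mathcal{GH}$ is continuous if it is continuous into some (equivalently, every) $\mathcal{GH}_n$ containing its image. $S_r(X)=\{Y\in\mathcal{GH}: d_{GH}(X,Y)=r\}$. *)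

From Stdlib Require Import Reals.
From Coquelicot Require Import Coquelicot.
Open Scope R_scope.

Definition is_metric {X : Type} (d : X -> X -> R) : Prop :=
  (forall x y, d x y = 0 <-> x = y) /\
  (forall x y, d x y = d y x) /\
  (forall x y z, d x z <= d x y + d y z).

(* Bundled metric spaces (elements of the class GH, up to isometry). *)
Record MetricSpace := MkMetricSpace {
  ms_pt : Type;
  ms_d : ms_pt -> ms_pt -> R;
  ms_metric : is_metric ms_d }.

Definition card_ge3 (X : Type) : Prop :=
  exists x y z : X, x <> y /\ y <> z /\ x <> z.

Definition s_M {X : Type} (d : X -> X -> R) : Rbar :=
  Glb_Rbar (fun r => exists x x', x <> x' /\ r = d x x').

Definition t_M {X : Type} (d : X -> X -> R) : Rbar :=
  Glb_Rbar (fun r => exists x x' x'', x <> x' /\ x' <> x'' /\ x <> x'' /\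
                      r = d x x' + d x' x'' - d x x'').

Definition bijection {X : Type} (f : X -> X) : Prop :=
  (forall x y, f x = f y -> x = y) /\ (forall y, exists x, f x = y).

Definition dis_map {X : Type} (d : X -> X -> R) (f : X -> X) : Rbar :=
  Lub_Rbar (fun r => exists x x', r = Rabs (d x x' - d (f x) (f x'))).

Definition e_M {X : Type} (d : X -> X -> R) : Rbar :=
  Rbar_glb (fun v => exists f : X -> X, bijection f /\ (exists x, f x <> x) /\
                     v = dis_map d f).

Definition correspondence {X Y : Type} (Rel : X -> Y -> Prop) : Prop :=
  (forall x, exists y, Rel x y) /\ (forall y, exists x, Rel x y).

Definition dis_rel {X Y : Type} (dX : X -> X -> R) (dY : Y -> Y -> R)
  (Rel : X -> Y -> Prop) : Rbar :=
  Lub_Rbar (fun r => exists x x' y y', Rel x y /\ Rel x' y' /\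
                      r = Rabs (dX x x' - dY y y')).

Definition dGH {X Y : Type} (dX : X -> X -> R) (dY : Y -> Y -> R) : Rbar :=
  Rbar_mult (Finite (/ 2))
    (Rbar_glb (fun v => exists Rel : X -> Y -> Prop,
                 correspondence Rel /\ v = dis_rel dX dY Rel)).

Definition in_GH_sphere {X Y : Type} (dX : X -> X -> R) (r : R)
  (dY : Y -> Y -> R) : Prop := dGH dX dY = Finite r.

(* Continuity of t |-> (X, d t) from [0,1] into GH, whose topology has the
   open d_GH-balls { Y | d_GH(Z,Y) < r } as a base. *)
Definition GH_continuous_curve {X : Type} (d : R -> X -> X -> R) : Prop :=
  forall t0, 0 <= t0 <= 1 ->
  forall (Z : MetricSpace) (r : R),
    Rbar_lt (dGH (ms_d Z) (d t0)) (Finite r) ->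
    exists delta, 0 < delta /\
      forall t, 0 <= t <= 1 -> Rabs (t - t0) < delta ->
        Rbar_lt (dGH (ms_d Z) (d t)) (Finite r).

From Stdlib Require Import Reals Lra Classical ClassicalEpsilon.
From Coquelicot Require Import Coquelicot.
Open Scope R_scope.

(* Write rho = d + B for a symmetric perturbation B with zero diagonal and
   |B| <= b.  The argument rests on three facts about such perturbations:
   - if every triangle of d has slack >= 3b and |B| < s(M) pointwise, then
     rho is again a metric (positivity from s(M), triangle inequality from
     the slack);
   - the identity correspondence has distortion sup|B| <= b, so
     d_GH(M, M_rho) <= b/2;
   - if b = sup|B| < s(M)/2 and every non-identity bijection of M distorts d
     by more than 2b, then a correspondence of distortion < b would be the
     graph of a bijection (distinct points are too far apart), which is
     impossible both for the identity and for every other bijection; hence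
     d_GH(M, M_rho) = b/2.
   Part (4) applies these facts to the segment rho_t = d + ((1-t)A + tA'),
   which still has sup = a when A and A' agree at a pair of distinct
   points; continuity of t |-> (M, rho_t) follows from the general fact
   that a curve of metrics which is Lipschitz in t, uniformly in the points,
   is continuous for d_GH. *)

Lemma Rbar_mult_pos_l (c : R) (G : Rbar) : 0 < c ->
  Rbar_mult (Finite c) G =
  match G with Finite g => Finite (c * g) | p_infty => p_infty | m_infty => m_infty end.
Proof.
  intros Hc; destruct G as [g| |]; simpl; auto;
    destruct Rle_dec as [H|H]; try (exfalso; lra);
    destruct Rle_lt_or_eq_dec; auto; lra.
Qed.

Lemma Rbar_div_pos (G : Rbar) (c : R) : 0 < c ->
  Rbar_div G (Finite c) =
  match G with Finite g => Finite (g / c) | p_infty => p_infty | m_infty => m_infty end.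
Proof.
  intros Hc. unfold Rbar_div; simpl.
  rewrite Rbar_mult_comm, Rbar_mult_pos_l by (apply Rinv_0_lt_compat; lra).
  destruct G; auto. simpl. f_equal. unfold Rdiv. ring.
Qed.

Lemma half_le (G : Rbar) (c : R) :
  Rbar_le G (Finite c) -> Rbar_le (Rbar_mult (Finite (/ 2)) G) (Finite (c / 2)).
Proof. rewrite Rbar_mult_pos_l by lra. destruct G; simpl; auto; lra. Qed.

Lemma half_ge (G : Rbar) (c : R) :
  Rbar_le (Finite c) G -> Rbar_le (Finite (c / 2)) (Rbar_mult (Finite (/ 2)) G).
Proof. rewrite Rbar_mult_pos_l by lra. destruct G; simpl; auto; lra. Qed.

Lemma half_lt_inv (G : Rbar) (r : R) :
  Rbar_lt (Rbar_mult (Finite (/ 2)) G) (Finite r) -> Rbar_lt G (Finite (2 * r)).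
Proof. rewrite Rbar_mult_pos_l by lra. destruct G; simpl; auto; lra. Qed.

Lemma lub_ub (E : R -> Prop) (x : R) : E x -> Rbar_le (Finite x) (Lub_Rbar E).
Proof. intros Hx. apply (proj1 (Lub_Rbar_correct E)), Hx. Qed.

Lemma lub_le (E : R -> Prop) (c : R) :
  (forall x, E x -> x <= c) -> Rbar_le (Lub_Rbar E) (Finite c).
Proof. intros Hc. apply (proj2 (Lub_Rbar_correct E)). intros x Hx; apply Hc, Hx. Qed.

Lemma lub_lt_bound (E : R -> Prop) (b : R) :
  Rbar_lt (Lub_Rbar E) (Finite b) -> exists c, c < b /\ forall x, E x -> x <= c.
Proof.
  intros H. pose proof (proj1 (Lub_Rbar_correct E)) as Hub. unfold is_ub_Rbar in Hub.
  destruct (Lub_Rbar E) as [l| |]; simpl in H; try tauto.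
  - exists l; split; [exact H | exact Hub].
  - exists (b - 1); split; [lra|]. intros x Hx. destruct (Hub x Hx).
Qed.

Lemma lub_approx (E : R -> Prop) (c : R) :
  Rbar_lt (Finite c) (Lub_Rbar E) -> exists x, E x /\ c < x.
Proof.
  intros H. apply NNPP; intros Hn. apply (Rbar_lt_not_le _ _ H), lub_le.
  intros x Hx. apply Rnot_lt_le. intros Hcx. apply Hn. exists x; auto.
Qed.

Lemma glb_lb (E : R -> Prop) (x : R) : E x -> Rbar_le (Glb_Rbar E) (Finite x).
Proof. intros Hx. apply (proj1 (Glb_Rbar_correct E)), Hx. Qed.

Lemma Rbar_glb_correct (E : Rbar -> Prop) : Rbar_is_glb E (Rbar_glb E).
Proof. unfold Rbar_glb. destruct (Rbar_ex_glb E); auto. Qed.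

Lemma Rbar_glb_lb (E : Rbar -> Prop) (v : Rbar) : E v -> Rbar_le (Rbar_glb E) v.
Proof. intros Hv. apply (proj1 (Rbar_glb_correct E)), Hv. Qed.

Lemma Rbar_glb_ge (E : Rbar -> Prop) (c : Rbar) :
  (forall v, E v -> Rbar_le c v) -> Rbar_le c (Rbar_glb E).
Proof. intros Hc. apply (proj2 (Rbar_glb_correct E)). exact Hc. Qed.

Lemma Rbar_glb_approx (E : Rbar -> Prop) (b : Rbar) :
  Rbar_lt (Rbar_glb E) b -> exists v, E v /\ Rbar_lt v b.
Proof.
  intros H. apply NNPP; intros Hn. apply (Rbar_lt_not_le _ _ H), Rbar_glb_ge.
  intros v Hv. apply Rbar_not_lt_le. intros Hvb. apply Hn. exists v; auto.
Qed.

(* Real-valued hypotheses extracted from s(M), t(M), e(M) and sup |a_ij|. *)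
Definition separated {X : Type} (d : X -> X -> R) (s0 : R) : Prop :=
  forall x y, x <> y -> s0 <= d x y.

Definition triangle_slack {X : Type} (d : X -> X -> R) (t0 : R) : Prop :=
  forall x y z, x <> y -> y <> z -> x <> z -> t0 <= d x y + d y z - d x z.

Definition abs_bounded {X : Type} (B : X -> X -> R) (b : R) : Prop :=
  forall i j, Rabs (B i j) <= b.

Definition abs_sup {X : Type} (B : X -> X -> R) (b : R) : Prop :=
  abs_bounded B b /\ forall c, c < b -> exists i j, c < Rabs (B i j).

Definition bijections_distort {X : Type} (d : X -> X -> R) (b : R) : Prop :=
  forall f, bijection f -> (exists x, f x <> x) ->
  exists x x', 2 * b < Rabs (d x x' - d (f x) (f x')).

Lemma s_M_finite {X : Type} (d : X -> X -> R) (x0 y0 : X) :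
  x0 <> y0 -> Rbar_lt (Finite 0) (s_M d) ->
  exists s0, s_M d = Finite s0 /\ separated d s0.
Proof.
  intros Hxy Hs.
  assert (Hlb : forall x y, x <> y -> Rbar_le (s_M d) (Finite (d x y))).
  { intros x y H. apply glb_lb. exists x, y; auto. }
  pose proof (Hlb x0 y0 Hxy) as H0.
  destruct (s_M d) as [s0| |]; simpl in Hs, H0; try tauto.
  exists s0; split; [reflexivity | exact Hlb].
Qed.

Lemma t_M_slack {X : Type} (d : X -> X -> R) (a : R) :
  card_ge3 X -> Rbar_le (Finite a) (Rbar_div (t_M d) (Finite 3)) ->
  triangle_slack d (3 * a).
Proof.
  intros [x0 [y0 [z0 [H1 [H2 H3]]]]] Ht.
  assert (Hlb : forall x y z, x <> y -> y <> z -> x <> z ->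
            Rbar_le (t_M d) (Finite (d x y + d y z - d x z))).
  { intros x y z Hxy Hyz Hxz. apply glb_lb. exists x, y, z; auto. }
  pose proof (Hlb x0 y0 z0 H1 H2 H3) as H0.
  rewrite Rbar_div_pos in Ht by lra.
  intros x y z Hxy Hyz Hxz. pose proof (Hlb x y z Hxy Hyz Hxz) as Hxyz.
  destruct (t_M d) as [t0| |]; simpl in Ht, H0, Hxyz; try tauto. lra.
Qed.

Lemma e_M_distort {X : Type} (d : X -> X -> R) (b : R) :
  Rbar_lt (Finite (2 * b)) (e_M d) -> bijections_distort d b.
Proof.
  intros He f Hf Hne.
  assert (Hdis : Rbar_lt (Finite (2 * b)) (dis_map d f)).
  { eapply Rbar_lt_le_trans; [exact He|]. apply Rbar_glb_lb. exists f; auto. }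
  destruct (lub_approx _ _ Hdis) as [r [[x [x' ->]] Hr]]. exists x, x'; exact Hr.
Qed.

Lemma lub_abs_sup {X : Type} (B : X -> X -> R) (a : R) :
  Lub_Rbar (fun r => exists i j, r = Rabs (B i j)) = Finite a -> abs_sup B a.
Proof.
  intros Ha. split.
  - intros i j. pose proof (lub_ub (fun r => exists i j, r = Rabs (B i j))
                                   (Rabs (B i j))) as H.
    rewrite Ha in H. apply H. eauto.
  - intros c Hc. destruct (lub_approx (fun r => exists i j, r = Rabs (B i j)) c)
      as [r [[i [j ->]] Hr]].
    + rewrite Ha. exact Hc.
    + exists i, j; exact Hr.
Qed.

(* The hypothesis of parts (3)-(4), unpacked. *)
Lemma min_quarter (x : R) (s e : Rbar) :
  Rbar_lt (Finite (x / 2)) (Rbar_min (Rbar_div s (Finite 4)) (Rbar_div e (Finite 4))) ->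
  Rbar_lt (Finite (2 * x)) s /\ Rbar_lt (Finite (2 * x)) e.
Proof.
  intros H.
  assert (Hs := Rbar_lt_le_trans _ _ _ H (Rbar_min_l _ _)).
  assert (He := Rbar_lt_le_trans _ _ _ H (Rbar_min_r _ _)).
  rewrite Rbar_div_pos in Hs, He by lra.
  split; [destruct s | destruct e]; simpl in *; auto; lra.
Qed.

Definition distortion_le {X Y : Type} (dX : X -> X -> R) (dY : Y -> Y -> R)
  (Rel : X -> Y -> Prop) (c : R) : Prop :=
  forall x x' y y', Rel x y -> Rel x' y' -> Rabs (dX x x' - dY y y') <= c.

Lemma dGH_le_of_corr {X Y : Type} (dX : X -> X -> R) (dY : Y -> Y -> R)
  (Rel : X -> Y -> Prop) (c : R) :
  correspondence Rel -> distortion_le dX dY Rel c -> Rbar_le (dGH dX dY) (Finite (c / 2)).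
Proof.
  intros HRel Hc. apply half_le.
  eapply Rbar_le_trans; [apply Rbar_glb_lb; exists Rel; split; [exact HRel | reflexivity]|].
  apply lub_le. intros r [x [x' [y [y' [Hxy [Hxy' ->]]]]]]. exact (Hc x x' y y' Hxy Hxy').
Qed.

Lemma dGH_ge_of_corr {X Y : Type} (dX : X -> X -> R) (dY : Y -> Y -> R) (c : R) :
  (forall Rel, correspondence Rel -> Rbar_le (Finite c) (dis_rel dX dY Rel)) ->
  Rbar_le (Finite (c / 2)) (dGH dX dY).
Proof.
  intros Hc. apply half_ge, Rbar_glb_ge. intros v [Rel [HRel ->]]. exact (Hc Rel HRel).
Qed.

Lemma dGH_lt_witness {X Y : Type} (dX : X -> X -> R) (dY : Y -> Y -> R) (r : R) :
  Rbar_lt (dGH dX dY) (Finite r) ->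
  exists Rel c, correspondence Rel /\ distortion_le dX dY Rel c /\ c < 2 * r.
Proof.
  intros H. apply half_lt_inv, Rbar_glb_approx in H.
  destruct H as [v [[Rel [HRel ->]] Hv]].
  destruct (lub_lt_bound _ _ Hv) as [c [Hc Hbound]].
  exists Rel, c. split; [exact HRel|split; [|exact Hc]].
  intros x x' y y' Hxy Hxy'. apply Hbound. exists x, x', y, y'; auto.
Qed.

Lemma small_distortion_bijection {X Y : Type} (dX : X -> X -> R) (dY : Y -> Y -> R)
  (Rel : X -> Y -> Prop) (c : R) :
  correspondence Rel -> distortion_le dX dY Rel c ->
  (forall x, dX x x = 0) -> (forall y, dY y y = 0) ->
  (forall x x', x <> x' -> c < dX x x') -> (forall y y', y <> y' -> c < dY y y') ->
  exists f : X -> Y, (forall x, Rel x (f x)) /\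
    (forall x x', f x = f x' -> x = x') /\ (forall y, exists x, f x = y).
Proof.
  intros [Htot Hsur] Hc HX0 HY0 HXfar HYfar.
  assert (Hfun : forall x y y', Rel x y -> Rel x y' -> y = y').
  { intros x y y' H1 H2. apply NNPP; intros Hyy.
    pose proof (Hc x x y y' H1 H2) as Hle. rewrite HX0, Rabs_minus_sym, Rminus_0_r in Hle.
    pose proof (Rle_abs (dY y y')). pose proof (HYfar y y' Hyy). lra. }
  assert (Hinj : forall x x' y, Rel x y -> Rel x' y -> x = x').
  { intros x x' y H1 H2. apply NNPP; intros Hxx.
    pose proof (Hc x x' y y H1 H2) as Hle. rewrite HY0, Rminus_0_r in Hle.
    pose proof (Rle_abs (dX x x')). pose proof (HXfar x x' Hxx). lra. }
  exists (fun x => proj1_sig (constructive_indefinite_description _ (Htot x))).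
  assert (Hf : forall x, Rel x (proj1_sig (constructive_indefinite_description _ (Htot x)))).
  { intros x. exact (proj2_sig (constructive_indefinite_description _ (Htot x))). }
  split; [exact Hf | split].
  - intros x x' Hxx. apply (Hinj x x' _ (Hf x)). rewrite Hxx. apply Hf.
  - intros y. destruct (Hsur y) as [x Hx]. exists x. exact (Hfun x _ _ (Hf x) Hx).
Qed.

Lemma lipschitz_curve_continuous {X : Type} (rhot : R -> X -> X -> R) (K : R) :
  0 <= K ->
  (forall t t0 x x', Rabs (rhot t x x' - rhot t0 x x') <= K * Rabs (t - t0)) ->
  GH_continuous_curve rhot.
Proof.
  intros HK HL t0 _ Z r Hr.
  destruct (dGH_lt_witness _ _ _ Hr) as [Rel [c [HRel [Hc Hc2r]]]].
  set (delta := (2 * r - c) / (K + 1)).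
  assert (Hdelta : delta * (K + 1) = 2 * r - c) by (unfold delta; field; lra).
  exists delta. split; [unfold delta; apply Rdiv_lt_0_compat; lra|].
  intros t _ Ht.
  assert (Hstep : K * Rabs (t - t0) < 2 * r - c).
  { pose proof (Rabs_pos (t - t0)). nra. }
  eapply Rbar_le_lt_trans.
  - apply (dGH_le_of_corr _ _ Rel (c + K * Rabs (t - t0)) HRel).
    intros z z' y y' Hzy Hzy'.
    replace (ms_d Z z z' - rhot t y y')
      with ((ms_d Z z z' - rhot t0 y y') - (rhot t y y' - rhot t0 y y')) by ring.
    eapply Rle_trans; [apply Rabs_triang|]. rewrite Rabs_Ropp.
    pose proof (Hc z z' y y' Hzy Hzy'). pose proof (HL t t0 y y'). lra.
  - simpl. lra.
Qed.

Section Perturbation.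

Variables (M : Type) (d rho B : M -> M -> R) (b s0 : R).
Hypothesis d_metric : is_metric d.
Hypothesis d_separated : separated d s0.
Hypothesis rho_def : forall i j, rho i j = d i j + B i j.
Hypothesis B_diag : forall i, B i i = 0.
Hypothesis B_bounded : abs_bounded B b.

Lemma d_diag (x : M) : d x x = 0.
Proof. apply (proj1 d_metric). reflexivity. Qed.

Lemma bound_nonneg (x : M) : 0 <= b.
Proof. pose proof (B_bounded x x) as H. rewrite B_diag, Rabs_R0 in H. exact H. Qed.

Lemma B_range (i j : M) : - b <= B i j <= b.
Proof. apply Rabs_le_between, B_bounded. Qed.

(* Part (1): slack 3b in every triangle keeps the triangle inequality. *)
Lemma perturbed_metric :
  (forall i j, B i j = B j i) -> triangle_slack d (3 * b) ->
  (forall i j, Rabs (B i j) < s0) -> is_metric rho.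
Proof.
  intros B_sym Hslack Hsmall. destruct d_metric as [_ [d_sym _]].
  assert (rho_diag : forall x, rho x x = 0).
  { intros x. rewrite rho_def, B_diag, d_diag. ring. }
  assert (rho_pos : forall x y, x <> y -> 0 < rho x y).
  { intros x y Hxy. rewrite rho_def.
    pose proof (d_separated x y Hxy). pose proof (Hsmall x y).
    pose proof (Rle_abs (- B x y)) as Hneg. rewrite Rabs_Ropp in Hneg. lra. }
  assert (rho_nonneg : forall x y, 0 <= rho x y).
  { intros x y. destruct (classic (x = y)) as [->|Hxy]; [rewrite rho_diag; lra|].
    left; auto. }
  split; [|split].
  - intros x y; split; [|intros ->; apply rho_diag].
    intros H0. apply NNPP; intros Hxy. pose proof (rho_pos x y Hxy). lra.
  - intros x y. rewrite !rho_def, d_sym, B_sym. reflexivity.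
  - intros x y z.
    destruct (classic (x = y)) as [->|Hxy]; [rewrite rho_diag; lra|].
    destruct (classic (y = z)) as [->|Hyz]; [rewrite rho_diag; lra|].
    destruct (classic (x = z)) as [->|Hxz].
    { rewrite rho_diag. pose proof (rho_nonneg z y). pose proof (rho_nonneg y z). lra. }
    rewrite !rho_def. pose proof (Hslack x y z Hxy Hyz Hxz).
    pose proof (B_range x y). pose proof (B_range y z). pose proof (B_range x z). lra.
Qed.

(* Part (2): the identity correspondence has distortion at most b. *)
Lemma dGH_perturbed_le : Rbar_le (dGH d rho) (Finite (b / 2)).
Proof.
  apply (dGH_le_of_corr d rho (fun x y => x = y)).
  - split; intros x; exists x; reflexivity.
  - intros x x' y y' -> ->. rewrite rho_def.
    replace (d y y' - (d y y' + B y y')) with (- B y y') by ring.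
    rewrite Rabs_Ropp. apply B_bounded.
Qed.

Lemma dis_perturbed_ge :
  abs_sup B b -> b < s0 / 2 -> bijections_distort d b ->
  forall Rel, correspondence Rel -> Rbar_le (Finite b) (dis_rel d rho Rel).
Proof.
  intros [_ B_sup] Hbs Hdistort Rel HRel.
  apply Rbar_not_lt_le. intros Hlt.
  destruct (lub_lt_bound _ _ Hlt) as [c [Hcb Hbound]].
  assert (Hc : distortion_le d rho Rel c).
  { intros x x' y y' Hxy Hxy'. apply Hbound. exists x, x', y, y'; auto. }
  destruct (small_distortion_bijection d rho Rel c HRel Hc) as [f [Hf [Hinj Hsurj]]].
  - exact d_diag.
  - intros y. rewrite rho_def, B_diag, d_diag. ring.
  - intros x x' Hxx. pose proof (d_separated x x' Hxx). pose proof (bound_nonneg x). lra.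
  - intros y y' Hyy. rewrite rho_def.
    pose proof (d_separated y y' Hyy). pose proof (B_range y y'). lra.
  - destruct (classic (exists x, f x <> x)) as [Hmoves|Hfixes].
    + destruct (Hdistort f (conj Hinj Hsurj) Hmoves) as [x [x' Hfar]].
      pose proof (Hc x x' (f x) (f x') (Hf x) (Hf x')) as Hclose.
      rewrite rho_def in Hclose.
      replace (d x x' - d (f x) (f x'))
        with ((d x x' - (d (f x) (f x') + B (f x) (f x'))) + B (f x) (f x')) in Hfar by ring.
      pose proof (Rabs_triang (d x x' - (d (f x) (f x') + B (f x) (f x'))) (B (f x) (f x'))).
      pose proof (B_bounded (f x) (f x')). lra.
    + assert (Hid : forall x, f x = x).
      { intros x. apply NNPP; intros Hx. apply Hfixes. exists x; exact Hx. }
      assert (Hrefl : forall x, Rel x x).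
      { intros x. rewrite <- (Hid x) at 2. apply Hf. }
      destruct (B_sup c Hcb) as [i [j Hij]].
      pose proof (Hc i j i j (Hrefl i) (Hrefl j)) as Hclose. rewrite rho_def in Hclose.
      replace (d i j - (d i j + B i j)) with (- B i j) in Hclose by ring.
      rewrite Rabs_Ropp in Hclose. lra.
Qed.

Lemma dGH_perturbed_eq :
  abs_sup B b -> b < s0 / 2 -> bijections_distort d b ->
  dGH d rho = Finite (b / 2).
Proof.
  intros Hsup Hbs Hdistort. apply Rbar_le_antisym; [exact dGH_perturbed_le|].
  apply dGH_ge_of_corr, dis_perturbed_ge; assumption.
Qed.

End Perturbation.

Lemma sign_value_abs (v a : R) : 0 <= a -> v = a \/ v = - a -> Rabs v = a.
Proof. intros Ha [-> | ->]; [|rewrite Rabs_Ropp]; apply Rabs_pos_eq, Ha. Qed.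

Lemma sign_family_bounded {X : Type} (A : X -> X -> R) (a : R) :
  0 <= a -> (forall i, A i i = 0) -> (forall i j, i <> j -> A i j = a \/ A i j = - a) ->
  abs_bounded A a.
Proof.
  intros Ha Hdiag Hpm i j. destruct (classic (i = j)) as [->|Hij].
  - rewrite Hdiag, Rabs_R0. exact Ha.
  - rewrite (sign_value_abs _ a Ha (Hpm i j Hij)). apply Rle_refl.
Qed.

Lemma convex_bounded {X : Type} (A A' : X -> X -> R) (a t : R) :
  abs_bounded A a -> abs_bounded A' a -> 0 <= t <= 1 ->
  abs_bounded (fun i j => (1 - t) * A i j + t * A' i j) a.
Proof.
  intros HA HA' Ht i j. eapply Rle_trans; [apply Rabs_triang|].
  rewrite !Rabs_mult, (Rabs_pos_eq (1 - t)), (Rabs_pos_eq t) by lra.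
  pose proof (HA i j). pose proof (HA' i j). nra.
Qed.

Lemma convex_sup {X : Type} (A A' : X -> X -> R) (a t : R) (i0 j0 : X) :
  abs_bounded A a -> abs_bounded A' a -> 0 <= t <= 1 ->
  A i0 j0 = A' i0 j0 -> Rabs (A i0 j0) = a ->
  abs_sup (fun i j => (1 - t) * A i j + t * A' i j) a.
Proof.
  intros HA HA' Ht Heq Habs. split; [exact (convex_bounded A A' a t HA HA' Ht)|].
  intros c Hc. exists i0, j0. rewrite <- Heq.
  replace ((1 - t) * A i0 j0 + t * A i0 j0) with (A i0 j0) by ring. lra.
Qed.

Lemma segment_lipschitz {X : Type} (P Q : X -> X -> R) (K : R) :
  (forall x x', Rabs (Q x x' - P x x') <= K) ->
  forall t t0 x x', Rabs (((1 - t) * P x x' + t * Q x x') - ((1 - t0) * P x x' + t0 * Q x x'))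
                    <= K * Rabs (t - t0).
Proof.
  intros HK t t0 x x'.
  replace (((1 - t) * P x x' + t * Q x x') - ((1 - t0) * P x x' + t0 * Q x x'))
    with ((t - t0) * (Q x x' - P x x')) by ring.
  rewrite Rabs_mult, Rmult_comm. apply Rmult_le_compat_r; [apply Rabs_pos | apply HK].
Qed.

Theorem lemma10 (M : Type) (d : M -> M -> R) (A : M -> M -> R) (a : R) :
  is_metric d ->
  card_ge3 M ->
  Rbar_lt (Finite 0) (s_M d) ->
  (forall i j, A i j = A j i) ->
  (forall i, A i i = 0) ->
  (forall i j, Rbar_lt (Finite (Rabs (A i j))) (s_M d)) ->
  Lub_Rbar (fun r => exists i j, r = Rabs (A i j)) = Finite a ->
  Rbar_le (Finite a) (Rbar_div (t_M d) (Finite 3)) ->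
  let rho := fun i j => d i j + A i j in
  (* (1) *) is_metric rho /\
  (* (2) *) Rbar_le (dGH d rho) (Finite (a / 2)) /\
  (Rbar_lt (Finite (a / 2))
     (Rbar_min (Rbar_div (s_M d) (Finite 4)) (Rbar_div (e_M d) (Finite 4))) ->
   (* (3) *) dGH d rho = Finite (a / 2) /\
   (* (4) *)
   ((forall i j, i <> j -> A i j = a \/ A i j = - a) ->
    in_GH_sphere d (a / 2) rho /\
    forall A' : M -> M -> R,
      (forall i j, A' i j = A' j i) ->
      (forall i, A' i i = 0) ->
      (forall i j, i <> j -> A' i j = a \/ A' i j = - a) ->
      let rho' := fun i j => d i j + A' i j in
      let rho_t := fun t i j => (1 - t) * rho i j + t * rho' i j in
      (forall t, 0 <= t <= 1 -> is_metric (rho_t t)) /\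
      GH_continuous_curve rho_t /\
      ((exists i j, i <> j /\ A i j = A' i j) ->
       forall t, 0 <= t <= 1 -> in_GH_sphere d (a / 2) (rho_t t)))).
Proof.
  intros d_metric Hcard Hs A_sym A_diag A_small Ha Ht rho.
  pose proof Hcard as [x0 [y0 [_ [Hxy0 _]]]].
  destruct (s_M_finite d x0 y0 Hxy0 Hs) as [s0 [Es Hsep]].
  assert (A_lt : forall i j, Rabs (A i j) < s0).
  { intros i j. pose proof (A_small i j) as H. rewrite Es in H. exact H. }
  destruct (lub_abs_sup A a Ha) as [A_bd A_approx].
  assert (Hslack := t_M_slack d a Hcard Ht).
  assert (rho_def : forall i j, rho i j = d i j + A i j) by reflexivity.
  assert (Ha0 := bound_nonneg M A a A_diag A_bd x0).
  split; [exact (perturbed_metric M d rho A a s0 d_metric Hsep rho_def A_diag A_bd A_sym Hslack A_lt)|].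
  split; [exact (dGH_perturbed_le M d rho A a rho_def A_bd)|].
  intros Hmin. destruct (min_quarter a _ _ Hmin) as [Has He].
  rewrite Es in Has. simpl in Has.
  assert (Ha_s0 : a < s0 / 2) by lra.
  assert (Hdistort := e_M_distort d a He).
  assert (Hexact : dGH d rho = Finite (a / 2)) by
    exact (dGH_perturbed_eq M d rho A a s0 d_metric Hsep rho_def A_diag A_bd
             (conj A_bd A_approx) Ha_s0 Hdistort).
  split; [exact Hexact|]. intros A_pm. split; [exact Hexact|].
  intros A' A'_sym A'_diag A'_pm rho' rho_t.
  assert (A'_bd := sign_family_bounded A' a Ha0 A'_diag A'_pm).
  set (Bt := fun t i j => (1 - t) * A i j + t * A' i j).
  assert (rho_t_def : forall t i j, rho_t t i j = d i j + Bt t i j).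
  { intros t i j. unfold rho_t, rho, rho', Bt. ring. }
  assert (Bt_diag : forall t i, Bt t i i = 0).
  { intros t i. unfold Bt. rewrite A_diag, A'_diag. ring. }
  split; [|split].
  - intros t Ht01.
    assert (Bt_bd : abs_bounded (Bt t) a) by exact (convex_bounded A A' a t A_bd A'_bd Ht01).
    apply (perturbed_metric M d (rho_t t) (Bt t) a s0 d_metric Hsep (rho_t_def t)
             (Bt_diag t) Bt_bd); [|exact Hslack|].
    + intros i j. unfold Bt. rewrite A_sym, A'_sym. reflexivity.
    + intros i j. pose proof (Bt_bd i j). lra.
  - apply (lipschitz_curve_continuous rho_t (2 * a)); [lra|].
    apply segment_lipschitz. intros x x'. unfold rho, rho'.
    replace (d x x' + A' x x' - (d x x' + A x x')) with (A' x x' + - A x x') by ring.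
    eapply Rle_trans; [apply Rabs_triang|]. rewrite Rabs_Ropp.
    pose proof (A_bd x x'). pose proof (A'_bd x x'). lra.
  - intros [i0 [j0 [Hij0 Heq]]] t Ht01.
    apply (dGH_perturbed_eq M d (rho_t t) (Bt t) a s0 d_metric Hsep (rho_t_def t)
             (Bt_diag t) (convex_bounded A A' a t A_bd A'_bd Ht01)); [|exact Ha_s0|exact Hdistort].
    exact (convex_sup A A' a t i0 j0 A_bd A'_bd Ht01 Heq
             (sign_value_abs _ a Ha0 (A_pm i0 j0 Hij0))).
Qed.
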